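(* Let $y$ be a string whose last character occurs nowhere else in $y$, and let $\mathrm{BT}(y)$ be the trie consisting only of the black nodes of $\mathrm{AST}(y)$ (i.e., the trie of the set $\mathcal{R}$). Then every leaf $\ell$ of $\mathrm{BT}(y)$ is a node of the suffix tree $\mathrm{ST}(y)$, i.e., $\ell\in\mathcal{L}$.
   Context: $\mathrm{Substr}(y)$ is the set of substrings of $y$. $\mathrm{BegPos}(x)=\{i\mid y[i..i+|x|-1]=x\}$, $\mathrm{EndPos}(x)=\{i\mid y[i-|x|+1..i]=x\}$. For $x\in\mathrm{Substr}(y)$, $\overrightarrow{x}$ is the longest $z$ with $\mathrm{BegPos}(z)=\mathrm{BegPos}(x)$ and $\overleftarrow{x}$ is the longest $z$ with $\mathrm{EndPos}(z)=\mathrm{EndPos}(x)$. $\mathcal{L}=\{\overrightarrow{x}\mid x\in\mathrm{Substr}(y)\}$ is the node set of the suffix tree $\mathrm{ST}(y)$, and $\mathcal{R}=\{\overleftarrow{x}\mid x\in\mathrm{Substr}(y)\}$. $\mathrm{AST}(y)$ is the rooted tree on node set $\mathcal{L}\cup\mathcal{R}$ in which the parent of each non-root node is its longest proper prefix in $\mathcal{L}\cup\mathcal{R}$; a node is black iff it belongs to $\mathcal{R}$. The set $\mathcal{R}$ is prefix-closed, and a leaf of $\mathrm{BT}(y)$ is an element of $\mathcal{R}$ that is not a proper prefix of any other element of $\mathcal{R}$. *)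

From mathcomp Require Import all_boot.
Set Implicit Arguments. Unset Strict Implicit. Unset Printing Implicit Defensive.

Section Strings.
Variable T : eqType.
Variable y : seq T.

(* 0-indexed: x occurs in y starting at position i *)
Definition occ_at (x : seq T) (i : nat) : bool :=
  (i + size x <= size y) && (take (size x) (drop i y) == x).

Definition BegPos (x : seq T) : nat -> bool := fun i => occ_at x i.

(* EndPos x = { i | y[i-|x|+1..i] = x }; in 0-indexed form, the occurrence
   ends at position i, i.e. starts at i + 1 - |x|. We use the "exclusive end"
   index j = i+1 to accommodate the empty string: j \in EndPosX x iff
   |x| <= j and x occurs starting at j - |x|. *)
Definition EndPos (x : seq T) : nat -> bool :=
  fun j => (size x <= j) && occ_at x (j - size x).

Definition is_substr (x : seq T) : Prop := exists i, occ_at x i.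

Definition is_right_ext (x z : seq T) : Prop :=
  (forall i, BegPos z i = BegPos x i) /\
  (forall w, (forall i, BegPos w i = BegPos x i) -> size w <= size z).

Definition is_left_ext (x z : seq T) : Prop :=
  (forall i, EndPos z i = EndPos x i) /\
  (forall w, (forall i, EndPos w i = EndPos x i) -> size w <= size z).

(* L: node set of the suffix tree ST(y) *)
Definition inL (z : seq T) : Prop := exists x, is_substr x /\ is_right_ext x z.
(* R: black nodes *)
Definition inR (z : seq T) : Prop := exists x, is_substr x /\ is_left_ext x z.

Definition proper_prefix (u v : seq T) : Prop :=
  size u < size v /\ prefix u v.

Definition BT_leaf (z : seq T) : Prop :=
  inR z /\ forall w, inR w -> ~ proper_prefix z w.

End Strings.

From mathcomp Require Import all_boot.
From mathcomp Require Import zify.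

Set Implicit Arguments. Unset Strict Implicit. Unset Printing Implicit Defensive.

(* A leaf z of BT(y) is right-maximal.  Otherwise every occurrence of z is
   followed by one and the same letter a, so za occurs exactly where z does
   and its end positions are those of z shifted by one.  A left extension
   p·za of za then makes p·z a left extension of z, hence p is empty by the
   left-maximality of z: za is itself in R, and z is not a leaf. *)

Section Occurrences.
Variables (T : eqType) (y : seq T).

Lemma occ_at_cat (u v : seq T) i :
  occ_at y (u ++ v) i = occ_at y u i && occ_at y v (i + size u).
Proof.
rewrite /occ_at size_cat takeD drop_drop (addnC (size u) i).
have [fit|long] := leqP (i + (size u + size v)) (size y); last first.
  have -> : (i + size u + size v <= size y) = false by lia.
  by rewrite !andbF.
have size_u : size (take (size u) (drop i y)) = size u.
  by rewrite size_take size_drop; case: ltnP => //; lia.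
rewrite eqseq_cat //.
have -> : (i + size u <= size y) = true by lia.
by have -> : (i + size u + size v <= size y) = true by lia.
Qed.

Lemma occ_at_inj (u v : seq T) i :
  occ_at y u i -> occ_at y v i -> size u = size v -> u = v.
Proof.
by move=> /andP[_ /eqP occ_u] /andP[_ /eqP occ_v] eq_size; rewrite -occ_u -occ_v eq_size.
Qed.

Lemma EndPos_occ_at (x : seq T) i : EndPos y x (i + size x) = occ_at y x i.
Proof. by rewrite /EndPos leq_addl addnK. Qed.

Lemma substr_EndPos (x : seq T) j : EndPos y x j -> is_substr y x.
Proof. by case/andP=> _ occ; exists (j - size x). Qed.

Lemma inRP (z : seq T) : inR y z <-> is_substr y z /\ is_left_ext y z z.
Proof.
split=> [[x [[i occ] [Ez max]]]|[sub ext]]; last by exists z.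
split; last by split=> // w Ew; apply: max => j; rewrite Ew Ez.
by apply: (substr_EndPos (j := i + size x)); rewrite Ez EndPos_occ_at.
Qed.

Lemma inL_right_maximal (z : seq T) :
  is_substr y z ->
  (forall w, BegPos y w =1 BegPos y z -> size w <= size z) -> inL y z.
Proof. by move=> sub max; exists z. Qed.

Lemma BegPos_prefix (z w : seq T) :
  is_substr y z -> BegPos y w =1 BegPos y z -> size z <= size w -> prefix z w.
Proof.
move=> [i occ_z] Ew le_zw; rewrite prefixE; apply/eqP.
have : occ_at y w i by rewrite /BegPos in Ew; rewrite Ew.
rewrite -{1}(cat_take_drop (size z) w) occ_at_cat => /andP[occ_take _].
by apply: occ_at_inj occ_take occ_z _; rewrite size_take_min; apply/minn_idPl.
Qed.

Lemma EndPos_suffix (u v : seq T) :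
  is_substr y u -> EndPos y v =1 EndPos y u -> size u <= size v -> suffix u v.
Proof.
move=> [i occ_u] Ev le_uv; rewrite suffixE; apply/eqP.
have /andP[le_v] : EndPos y v (i + size u) by rewrite Ev EndPos_occ_at.
rewrite -{1}(cat_take_drop (size v - size u) v) occ_at_cat => /andP[_].
rewrite size_take_min (minn_idPl (leq_subr _ _)) => occ_drop.
apply: occ_at_inj occ_drop _ _; last by rewrite size_drop; lia.
by rewrite (_ : _ + _ = i) //; lia.
Qed.

Lemma BegPos_longer_rcons (z w : seq T) :
  is_substr y z -> BegPos y w =1 BegPos y z -> size z < size w ->
  exists a, occ_at y (rcons z a) =1 occ_at y z.
Proof.
move=> sub Ew lt_zw; have /prefixP[[|a r] def_w] := BegPos_prefix sub Ew (ltnW lt_zw).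
  by move: lt_zw; rewrite def_w cats0 ltnn.
exists a => i; apply/idP/idP=> [|occ_z]; first by rewrite -cats1 occ_at_cat => /andP[].
by move: (Ew i); rewrite /BegPos occ_z def_w -cat_rcons occ_at_cat => /andP[].
Qed.

Lemma EndPos_rcons (z : seq T) (a : T) k :
  occ_at y (rcons z a) =1 occ_at y z -> EndPos y (rcons z a) k.+1 = EndPos y z k.
Proof. by move=> occ_za; rewrite /EndPos size_rcons ltnS subSS occ_za. Qed.

Section RightExtension.
Variables (z : seq T) (a : T).
Hypothesis occ_za : occ_at y (rcons z a) =1 occ_at y z.

Lemma occ_at_cat_rcons p : occ_at y (rcons (p ++ z) a) =1 occ_at y (p ++ z).
Proof. by move=> i; rewrite rcons_cat !occ_at_cat occ_za. Qed.

Lemma inR_rcons : inR y z -> inR y (rcons z a).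
Proof.
case/inRP=> [[i occ_z] [_ max_z]].
have sub : is_substr y (rcons z a) by exists i; rewrite occ_za.
apply/inRP; split=> //; split=> // v Ev; rewrite leqNgt; apply/negP=> lt_v.
have /suffixP[p def_v] := EndPos_suffix sub Ev (ltnW lt_v).
have Epz : EndPos y (p ++ z) =1 EndPos y z.
  move=> k; rewrite -(EndPos_rcons k occ_za) -Ev def_v -rcons_cat.
  by rewrite EndPos_rcons //; apply: occ_at_cat_rcons.
move: (max_z _ Epz) lt_v; rewrite def_v !size_cat size_rcons; lia.
Qed.

End RightExtension.
End Occurrences.

Theorem lemma5 (T : eqType) (s : seq T) (c : T) :
  c \notin s ->
  forall l : seq T, BT_leaf (rcons s c) l -> inL (rcons s c) l.
Proof.
move=> _ z [Rz leaf]; have /inRP[sub_z _] := Rz.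
apply: inL_right_maximal => // w Ew; rewrite leqNgt; apply/negP=> lt_zw.
have [a occ_za] := BegPos_longer_rcons sub_z Ew lt_zw.
apply: (leaf (rcons z a)); first exact: inR_rcons.
by split; [rewrite size_rcons | exact: prefix_rcons].
Qed.
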